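(* Let $X$ be a real Hilbert space, let $U,V$ be closed affine subspaces with $U\cap V=\varnothing$, let $T:=T_{U,V}$ and assume $v:=P_{\overline{\operatorname{ran}}(\mathrm{Id}-T)}0\in\operatorname{ran}(\mathrm{Id}-T)$. Set $\widetilde A:=N_U^{-1}$ and $\widetilde B:=N_V^{-\vee}$. Then $T_{(\widetilde A,\widetilde B)}=T_{U,V}$, and for every $x\in X$, $J_{\widetilde A}T^nx=T^nx-P_UT^nx$ and $\|J_{\widetilde A}T^nx\|\to\infty$.
   Context: For maximally monotone $A,B$: $J_A:=(\mathrm{Id}+A)^{-1}$, $T_{(A,B)}:=\mathrm{Id}-J_A+J_B(2J_A-\mathrm{Id})$; $T_{U,V}:=T_{(N_U,N_V)}=\mathrm{Id}-P_U+P_V(2P_U-\mathrm{Id})$. For an operator $C$, $C^\vee:=(-\mathrm{Id})\circ C\circ(-\mathrm{Id})$ and $C^{-\vee}:=(C^{-1})^\vee$. *)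

From Stdlib Require Import Reals Lra ClassicalEpsilon.
Open Scope R_scope.

Record HilbertSpace := {
  carrier :> Type;
  hzero : carrier;
  hadd : carrier -> carrier -> carrier;
  hopp : carrier -> carrier;
  hscal : R -> carrier -> carrier;
  inner : carrier -> carrier -> R;
  hadd_assoc : forall x y z, hadd x (hadd y z) = hadd (hadd x y) z;
  hadd_comm : forall x y, hadd x y = hadd y x;
  hadd_0 : forall x, hadd x hzero = x;
  hadd_opp : forall x, hadd x (hopp x) = hzero;
  hscal_assoc : forall a b x, hscal a (hscal b x) = hscal (a * b) x;
  hscal_1 : forall x, hscal 1 x = x;
  hscal_distr_vec : forall a x y, hscal a (hadd x y) = hadd (hscal a x) (hscal a y);
  hscal_distr_scal : forall a b x, hscal (a + b) x = hadd (hscal a x) (hscal b x);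
  inner_sym : forall x y, inner x y = inner y x;
  inner_add_l : forall x y z, inner (hadd x y) z = inner x z + inner y z;
  inner_scal_l : forall a x y, inner (hscal a x) y = a * inner x y;
  inner_nonneg : forall x, 0 <= inner x x;
  inner_def : forall x, inner x x = 0 -> x = hzero;
  hcomplete : forall u : nat -> carrier,
    (forall eps, 0 < eps -> exists N, forall m n, (N <= m)%nat -> (N <= n)%nat ->
       sqrt (inner (hadd (u m) (hopp (u n))) (hadd (u m) (hopp (u n)))) < eps) ->
    exists l, forall eps, 0 < eps -> exists N, forall n, (N <= n)%nat ->
       sqrt (inner (hadd (u n) (hopp l)) (hadd (u n) (hopp l))) < eps
}.

Arguments hzero {h}.
Arguments hadd {h}.
Arguments hopp {h}.
Arguments hscal {h}.
Arguments inner {h}.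

Section Ops.
Context {X : HilbertSpace}.

Definition hsub (x y : X) : X := hadd x (hopp y).
Definition norm (x : X) : R := sqrt (inner x x).

Definition hset := X -> Prop.
Definition operator := X -> X -> Prop.   (* A x y  means  y ∈ A x *)

Definition closure (S : hset) : hset :=
  fun x => forall eps, 0 < eps -> exists s, S s /\ norm (hsub x s) < eps.
Definition is_closed (S : hset) : Prop := forall x, closure S x -> S x.

Definition is_affine (S : hset) : Prop :=
  (exists s, S s) /\
  forall x y (l : R), S x -> S y -> S (hadd (hscal (1 - l) x) (hscal l y)).
Definition is_closed_affine (S : hset) : Prop := is_affine S /\ is_closed S.

(** Metric projection onto C: the (unique, when C is nonempty closed convex)
    nearest point.  proj C x is chosen by classical choice among nearest points. *)
Definition is_proj (C : hset) (x p : X) : Prop :=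
  C p /\ forall c, C c -> norm (hsub x p) <= norm (hsub x c).
Definition proj (C : hset) (x : X) : X :=
  epsilon (inhabits hzero) (is_proj C x).

Definition normal_cone (C : hset) : operator :=
  fun x u => C x /\ forall c, C c -> inner u (hsub c x) <= 0.

Definition op_inv (A : operator) : operator := fun x y => A y x.
Definition op_vee (A : operator) : operator := fun x y => A (hopp x) (hopp y).
Definition op_inv_vee (A : operator) : operator := op_vee (op_inv A).

(** Resolvent J_A := (Id + A)^{-1}, as a relation: J_A x y iff x ∈ y + A y. *)
Definition resolvent (A : operator) : operator :=
  fun x y => A y (hsub x y).

(** Douglas–Rachford operator T_(A,B) := Id - J_A + J_B (2 J_A - Id), as a relation. *)
Definition DR_op (A B : operator) : operator :=
  fun x z => exists a b, resolvent A x a /\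
     resolvent B (hsub (hscal 2 a) x) b /\ z = hadd (hsub x a) b.

Definition T_UV (U V : hset) (x : X) : X :=
  hadd (hsub x (proj U x)) (proj V (hsub (hscal 2 (proj U x)) x)).

Definition ran_Id_minus (T : X -> X) : hset :=
  fun y => exists x, y = hsub x (T x).

End Ops.

(** The resolvents are explicit: [J_{N_U^{-1}} = Id - P_U] and
    [J_{N_V^{-∨}} = Id + P_V ∘ (-Id)], and substituting them into the
    Douglas–Rachford formula gives [T_{U,V}] back.

    For the divergence, [T] is affine and nonexpansive. If the minimal
    displacement [v = z - T z] is attained, then [T z - T² z] lies in
    [ran (Id - T)], a convex set, and has norm at most [‖v‖]; since [v] is the
    point of its closure nearest to [0], [T z - T² z = v], and
    affinity gives [Tⁿ z = z - n v]. The map [Id - P_U] is affine too, so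
    [(Id - P_U) Tⁿ z = (Id - P_U) z - n w] with
    [w = (Id - P_U) z - (Id - P_U) T z]. If [w] were [0], then
    [P_U (T z) = P_V (2 P_U z - z)] would lie in [U ∩ V]. Hence the norms grow
    linearly along the orbit of [z], and nonexpansiveness of [T] and of
    [Id - P_U] transfers this growth to every starting point. *)

From Stdlib Require Import Reals Lra Lia ClassicalEpsilon.
Open Scope R_scope.

Notation comb l a b := (hadd (hscal (1 - l) a) (hscal l b)).

Section InnerProduct.
Context {X : HilbertSpace}.
Implicit Types x y z a b : X.

Lemma inner_add_r x y z : inner z (hadd x y) = inner z x + inner z y.
Proof. rewrite inner_sym, inner_add_l, (inner_sym _ x), (inner_sym _ y); ring. Qed.

Lemma inner_scal_r l x y : inner y (hscal l x) = l * inner y x.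
Proof. rewrite inner_sym, inner_scal_l, (inner_sym _ x); ring. Qed.

Lemma inner_zero_l y : inner (@hzero X) y = 0.
Proof.
  assert (E : inner (hadd (@hzero X) hzero) y = inner (@hzero X) y) by now rewrite hadd_0.
  rewrite inner_add_l in E; lra.
Qed.

Lemma inner_zero_r y : inner y (@hzero X) = 0.
Proof. rewrite inner_sym; apply inner_zero_l. Qed.

Lemma inner_opp_l x y : inner (hopp x) y = - inner x y.
Proof.
  assert (E : inner (hadd x (hopp x)) y = 0) by (rewrite hadd_opp; apply inner_zero_l).
  rewrite inner_add_l in E; lra.
Qed.

Lemma inner_opp_r x y : inner y (hopp x) = - inner y x.
Proof. rewrite inner_sym, inner_opp_l, inner_sym; reflexivity. Qed.

Lemma eq_of_inner_sub a b : inner (hsub a b) (hsub a b) = 0 -> a = b.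
Proof.
  intro H. apply inner_def in H. unfold hsub in H.
  rewrite <- (hadd_0 _ a), <- (hadd_opp _ b), (hadd_comm _ b), hadd_assoc, H,
    hadd_comm, hadd_0. reflexivity.
Qed.

End InnerProduct.

(* Identities between inner products of vector expressions are proved by
   expanding bilinearly, identifying [inner b a] with [inner a b], and calling
   [ring]; an identity [a = b] of vectors is reduced to [‖a - b‖² = 0]. *)
Ltac inner_expand := unfold hsub; repeat (rewrite ?inner_add_l, ?inner_add_r,
   ?inner_scal_l, ?inner_scal_r, ?inner_opp_l, ?inner_opp_r, ?inner_zero_l,
   ?inner_zero_r).
Ltac inner_sym_normalize := repeat match goal with
 | |- context [@inner ?h ?a ?b] => match goal with |- context [@inner h b a] =>
      tryif constr_eq a b then fail else rewrite (inner_sym _ b a) end end.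
Ltac inner_ring := inner_expand; inner_sym_normalize; ring.
Ltac vector_eq := apply eq_of_inner_sub; inner_ring.

Section Norm.
Context {X : HilbertSpace}.
Implicit Types x y a b c : X.

Lemma norm_nonneg x : 0 <= norm x.
Proof. apply sqrt_pos. Qed.

Lemma norm_sqr x : norm x * norm x = inner x x.
Proof. apply sqrt_sqrt, inner_nonneg. Qed.

Lemma norm_le_of_inner x y : inner x x <= inner y y -> norm x <= norm y.
Proof. apply sqrt_le_1_alt. Qed.

Lemma inner_le_of_norm x y : norm x <= norm y -> inner x x <= inner y y.
Proof. intro H. rewrite <- !norm_sqr. pose proof (norm_nonneg x). nra. Qed.

Lemma Cauchy_Schwarz x y : inner x y <= norm x * norm y.
Proof.
  destruct (Req_dec (inner y y) 0) as [H0|H0].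
  { apply inner_def in H0. subst y. rewrite inner_zero_r.
    pose proof (norm_nonneg x); pose proof (norm_nonneg hzero); nra. }
  assert (Hy : 0 < inner y y) by (pose proof (inner_nonneg X y); lra).
  set (t := inner x y / inner y y).
  assert (E : inner (hsub x (hscal t y)) (hsub x (hscal t y))
              = (inner x x * inner y y - inner x y * inner x y) / inner y y).
  { unfold t. inner_expand. inner_sym_normalize. field. lra. }
  pose proof (inner_nonneg X (hsub x (hscal t y))) as P. rewrite E in P.
  assert (Hq : inner x y * inner x y <= inner x x * inner y y).
  { apply Rmult_le_compat_r with (r := inner y y) in P; [|lra].
    unfold Rdiv in P. rewrite Rmult_assoc, Rinv_l, Rmult_0_l in P; lra. }
  rewrite <- (norm_sqr x), <- (norm_sqr y) in Hq.
  pose proof (norm_nonneg x); pose proof (norm_nonneg y).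
  apply Rnot_lt_le. intro h.
  assert (0 <= norm x * norm y) by nra.
  assert (norm x * norm y * (norm x * norm y) < inner x y * inner x y) by nra.
  lra.
Qed.

Lemma norm_triangle x y : norm (hadd x y) <= norm x + norm y.
Proof.
  assert (E : inner (hadd x y) (hadd x y) = inner x x + 2 * inner x y + inner y y)
    by inner_ring.
  pose proof (Cauchy_Schwarz x y). pose proof (norm_sqr (hadd x y)).
  rewrite <- (norm_sqr x), <- (norm_sqr y) in E.
  pose proof (norm_nonneg x); pose proof (norm_nonneg y); pose proof (norm_nonneg (hadd x y)).
  nra.
Qed.

Lemma norm_opp x : norm (hopp x) = norm x.
Proof. unfold norm. f_equal. inner_ring. Qed.

Lemma norm_sub_comm a b : norm (hsub a b) = norm (hsub b a).
Proof. unfold norm. f_equal. inner_ring. Qed.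

Lemma norm_sub_triangle a b c : norm (hsub a b) <= norm (hsub a c) + norm (hsub c b).
Proof. replace (hsub a b) with (hadd (hsub a c) (hsub c b)) by vector_eq. apply norm_triangle. Qed.

Lemma norm_sub_le a b : norm (hsub a b) <= norm a + norm b.
Proof. unfold hsub at 1. rewrite <- (norm_opp b). apply norm_triangle. Qed.

Lemma norm_le_add_sub a b : norm a <= norm b + norm (hsub a b).
Proof. replace a with (hadd b (hsub a b)) at 1 by vector_eq. apply norm_triangle. Qed.

Lemma norm_scal l x : norm (hscal l x) = Rabs l * norm x.
Proof.
  unfold norm. rewrite inner_scal_l, inner_scal_r, <- Rmult_assoc, sqrt_mult.
  - f_equal. rewrite <- sqrt_Rsqr_abs. reflexivity.
  - nra.
  - apply inner_nonneg.
Qed.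

Lemma norm_sub_diag a : norm (hsub a a) = 0.
Proof. unfold norm. replace (inner (hsub a a) (hsub a a)) with 0 by inner_ring. apply sqrt_0. Qed.

Lemma norm_eq_0 x : norm x = 0 -> x = hzero.
Proof. intro H. apply inner_def. rewrite <- norm_sqr, H. ring. Qed.

End Norm.

Section NearestPoint.
Context {X : HilbertSpace}.
Implicit Types x c p : X.

Definition is_convex (C : @hset X) : Prop :=
  forall a b l, 0 <= l <= 1 -> C a -> C b -> C (comb l a b).

Lemma affine_is_convex (C : @hset X) : is_affine C -> is_convex C.
Proof. intros [_ H] a b l _. apply H. Qed.

Lemma closure_incl (C : @hset X) c : C c -> closure C c.
Proof. intros H e He. exists c. split; auto. rewrite norm_sub_diag. exact He. Qed.

Lemma closure_distance_ge (C : @hset X) x d c :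
  (forall s, C s -> d <= norm (hsub x s)) -> closure C c -> d <= norm (hsub x c).
Proof.
  intros Hd Hc. apply Rnot_lt_le. intro h.
  destruct (Hc (d - norm (hsub x c)) ltac:(lra)) as [s [Hs Hcs]].
  pose proof (Hd s Hs). pose proof (norm_sub_triangle x s c). lra.
Qed.

Lemma inv_INR_succ_bounds (n : nat) : 0 < / (INR n + 1) <= 1.
Proof.
  pose proof (pos_INR n). split.
  - apply Rinv_0_lt_compat; lra.
  - rewrite <- Rinv_1. apply Rinv_le_contravar; lra.
Qed.

Lemma inv_INR_succ_lt e : 0 < e -> exists N : nat, forall n, (N <= n)%nat -> / (INR n + 1) < e.
Proof.
  intro He. destruct (INR_unbounded (/ e)) as [N HN]. exists N. intros n Hn.
  apply le_INR in Hn. pose proof (pos_INR N).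
  assert (0 < / e) by (apply Rinv_0_lt_compat; lra).
  rewrite <- (Rinv_inv e). apply Rinv_lt_contravar; nra.
Qed.

Lemma distance_infimum (C : @hset X) x : (exists c, C c) ->
  exists d, 0 <= d /\ (forall c, C c -> d <= norm (hsub x c)) /\
    (forall e, 0 < e -> exists c, C c /\ norm (hsub x c) < d + e).
Proof.
  intros [c0 Hc0].
  set (S := fun r => exists c, C c /\ r = - norm (hsub x c)).
  destruct (completeness S) as [m [Hub Hlub]].
  { exists 0. intros r [c [_ ->]]. pose proof (norm_nonneg (hsub x c)); lra. }
  { exists (- norm (hsub x c0)), c0; auto. }
  exists (- m). split; [|split].
  - enough (m <= 0) by lra.
    apply Hlub. intros r [c [_ ->]]. pose proof (norm_nonneg (hsub x c)); lra.
  - intros c Hc. enough (- norm (hsub x c) <= m) by lra. apply Hub. exists c; auto.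
  - intros e He. apply NNPP. intro Hn.
    enough (m <= m - e) by lra.
    apply Hlub. intros r [c [Hc ->]].
    apply Rnot_lt_le. intro h. apply Hn. exists c. split; auto. lra.
Qed.

(* The parallelogram law applied to [x - c1] and [x - c2], with the midpoint
   of [c1], [c2] lying in [C]. *)
Lemma convex_near_minimizers_close (C : @hset X) x d c1 c2 e1 e2 : is_convex C ->
  (forall c, C c -> d <= norm (hsub x c)) -> 0 <= d -> C c1 -> C c2 ->
  0 <= e1 <= 1 -> 0 <= e2 <= 1 -> norm (hsub x c1) < d + e1 -> norm (hsub x c2) < d + e2 ->
  inner (hsub c1 c2) (hsub c1 c2) <= (4 * d + 2) * (e1 + e2).
Proof.
  intros Hconv Hd Hd0 H1 H2 He1 He2 N1 N2.
  set (mid := comb (/2) c1 c2).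
  assert (Hmid : d <= norm (hsub x mid)) by (apply Hd, Hconv; auto; lra).
  assert (E : inner (hsub c1 c2) (hsub c1 c2) =
    2 * inner (hsub x c1) (hsub x c1) + 2 * inner (hsub x c2) (hsub x c2)
    - 4 * inner (hsub x mid) (hsub x mid))
    by (unfold mid; inner_expand; inner_sym_normalize; field).
  rewrite E, <- !norm_sqr.
  pose proof (norm_nonneg (hsub x c1)); pose proof (norm_nonneg (hsub x c2)).
  set (a := norm (hsub x c1)) in *. set (b := norm (hsub x c2)) in *.
  set (g := norm (hsub x mid)) in *.
  assert (a * a <= (d + e1) * (d + e1)) by nra.
  assert (b * b <= (d + e2) * (d + e2)) by nra.
  assert (d * d <= g * g) by nra.
  nra.
Qed.

Lemma minimizing_sequence_cauchy (C : @hset X) x d (u : nat -> X) :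
  is_convex C -> 0 <= d -> (forall c, C c -> d <= norm (hsub x c)) ->
  (forall n, C (u n) /\ norm (hsub x (u n)) < d + / (INR n + 1)) ->
  forall e, 0 < e -> exists N, forall m n, (N <= m)%nat -> (N <= n)%nat ->
    norm (hsub (u m) (u n)) < e.
Proof.
  intros Hconv Hd0 Hd Hu e He.
  set (K := 4 * d + 2).
  destruct (inv_INR_succ_lt (e * e / (2 * K))) as [N HN].
  { unfold K. apply Rdiv_lt_0_compat; nra. }
  exists N. intros m n Hm Hn.
  destruct (Hu m) as [Cm Nm]. destruct (Hu n) as [Cn Nn].
  destruct (inv_INR_succ_bounds m) as [Hm0 Hm1].
  destruct (inv_INR_succ_bounds n) as [Hn0 Hn1].
  pose proof (convex_near_minimizers_close C x d _ _ _ _ Hconv Hd Hd0 Cm Cn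
    (conj (Rlt_le _ _ Hm0) Hm1) (conj (Rlt_le _ _ Hn0) Hn1) Nm Nn) as Hb.
  pose proof (HN m Hm). pose proof (HN n Hn).
  assert (Hsq : inner (hsub (u m) (u n)) (hsub (u m) (u n)) < e * e).
  { assert (Hlt : K * (/ (INR m + 1) + / (INR n + 1)) < K * (2 * (e * e / (2 * K))))
      by (unfold K in *; nra).
    replace (K * (2 * (e * e / (2 * K)))) with (e * e) in Hlt by (field; unfold K; lra).
    fold K in Hb. lra. }
  rewrite <- norm_sqr in Hsq. pose proof (norm_nonneg (hsub (u m) (u n))). nra.
Qed.

Lemma nearest_point_in_closure (C : @hset X) x : (exists c, C c) -> is_convex C ->
  exists p, closure C p /\ forall c, closure C c -> norm (hsub x p) <= norm (hsub x c).
Proof.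
  intros Hne Hconv.
  destruct (distance_infimum C x Hne) as [d [Hd0 [Hlow Happrox]]].
  assert (Hu : forall n : nat, exists c, C c /\ norm (hsub x c) < d + / (INR n + 1))
    by (intro n; apply Happrox, inv_INR_succ_bounds).
  destruct (choice _ Hu) as [u Hu'].
  destruct (hcomplete X u (minimizing_sequence_cauchy C x d u Hconv Hd0 Hlow Hu'))
    as [l Hl].
  change (forall e, 0 < e -> exists N, forall n, (N <= n)%nat -> norm (hsub (u n) l) < e)
    in Hl.
  exists l. split.
  - intros e He. destruct (Hl e He) as [N HN]. exists (u N). split.
    + apply (Hu' N).
    + rewrite norm_sub_comm. apply HN. lia.
  - intros c Hc. apply Rle_trans with d; [|exact (closure_distance_ge C x d c Hlow Hc)].
    apply Rnot_lt_le. intro h.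
    set (e := (norm (hsub x l) - d) / 2).
    assert (He : 0 < e) by (unfold e; lra).
    destruct (Hl e He) as [N1 HN1]. destruct (inv_INR_succ_lt e He) as [N2 HN2].
    set (n := max N1 N2).
    pose proof (HN1 n ltac:(lia)). pose proof (HN2 n ltac:(lia)).
    destruct (Hu' n) as [_ Hn]. pose proof (norm_sub_triangle x l (u n)).
    unfold e in *. lra.
Qed.

(* Minimality along the segment [p, c] forces the angle at [p] to be obtuse. *)
Lemma nearest_point_obtuse (C : @hset X) x p c : is_proj C x p -> C c ->
  (forall t, 0 < t <= 1 -> C (comb t p c)) -> inner (hsub x p) (hsub c p) <= 0.
Proof.
  intros [Hp Hmin] Hc Hseg.
  set (A := inner (hsub x p) (hsub c p)). set (B := inner (hsub c p) (hsub c p)).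
  assert (HB : 0 <= B) by apply inner_nonneg.
  assert (K : forall t, 0 < t <= 1 -> 2 * t * A <= t * t * B).
  { intros t Ht. pose proof (inner_le_of_norm _ _ (Hmin _ (Hseg t Ht))) as H.
    assert (E : inner (hsub x (comb t p c)) (hsub x (comb t p c)) =
       inner (hsub x p) (hsub x p) - 2 * t * A + t * t * B) by (unfold A, B; inner_ring).
    lra. }
  apply Rnot_lt_le. intro hA.
  set (t := Rmin 1 (A / (B + 1))).
  assert (Ht : 0 < t <= 1).
  { unfold t. split; [apply Rmin_glb_lt; [lra|apply Rdiv_lt_0_compat; lra]|apply Rmin_l]. }
  pose proof (K t Ht).
  assert (t * (B + 1) <= A).
  { unfold t. pose proof (Rmin_r 1 (A / (B + 1))).
    replace A with (A / (B + 1) * (B + 1)) at 2 by (field; lra). nra. }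
  nra.
Qed.

Lemma obtuse_point_unique (C : @hset X) x p q :
  (forall c, C c -> inner (hsub x p) (hsub c p) <= 0) ->
  (forall c, C c -> inner (hsub x q) (hsub c q) <= 0) -> C p -> C q -> p = q.
Proof.
  intros H1 H2 Hp Hq. pose proof (H1 q Hq). pose proof (H2 p Hp).
  apply eq_of_inner_sub. apply Rle_antisym; [|apply inner_nonneg].
  assert (E : inner (hsub p q) (hsub p q)
              = inner (hsub x p) (hsub q p) + inner (hsub x q) (hsub p q)) by inner_ring.
  lra.
Qed.

End NearestPoint.

Section AffineProjection.
Context {X : HilbertSpace}.
Variable C : @hset X.
Hypothesis HC : is_closed_affine C.
Implicit Types x y c p : X.

Lemma proj_spec x : is_proj C x (proj C x).
Proof.
  destruct HC as [[Hne Haff] Hcl]. unfold proj. apply epsilon_spec.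
  destruct (nearest_point_in_closure C x Hne (affine_is_convex C (conj Hne Haff)))
    as [p [Hp Hmin]].
  exists p. split; auto. intros c Hc. apply Hmin, closure_incl, Hc.
Qed.

Lemma proj_mem x : C (proj C x).
Proof. apply proj_spec. Qed.

(* An affine set contains the whole line through two of its points, so the
   obtuse-angle inequality holds on both sides of [proj C x]. *)
Lemma proj_orthogonal x c : C c -> inner (hsub x (proj C x)) (hsub c (proj C x)) = 0.
Proof.
  intro Hc. destruct HC as [[_ Haff] _].
  assert (Hseg : forall c, C c -> forall t, 0 < t <= 1 -> C (comb t (proj C x) c))
    by (intros; apply Haff; auto; apply proj_mem).
  assert (Hc' : C (comb (-1) (proj C x) c)) by (apply Haff; auto; apply proj_mem).
  pose proof (nearest_point_obtuse C x _ c (proj_spec x) Hc (Hseg c Hc)).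
  pose proof (nearest_point_obtuse C x _ _ (proj_spec x) Hc' (Hseg _ Hc')).
  set (p := proj C x) in *.
  assert (E : inner (hsub x p) (hsub (comb (-1) p c) p) = - inner (hsub x p) (hsub c p))
    by inner_ring.
  lra.
Qed.

Lemma proj_obtuse x c : C c -> inner (hsub x (proj C x)) (hsub c (proj C x)) <= 0.
Proof. intro Hc. rewrite proj_orthogonal; auto; lra. Qed.

Lemma proj_unique x p : C p ->
  (forall c, C c -> inner (hsub x p) (hsub c p) <= 0) -> p = proj C x.
Proof.
  intros Hp H. apply (obtuse_point_unique C x); auto.
  - apply proj_obtuse.
  - apply proj_mem.
Qed.

Lemma proj_comb l x y : proj C (comb l x y) = comb l (proj C x) (proj C y).
Proof.
  symmetry. apply proj_unique.
  - destruct HC as [[_ Haff] _]. apply Haff; apply proj_mem.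
  - intros c Hc. set (p := proj C x). set (q := proj C y).
    assert (E : inner (hsub (comb l x y) (comb l p q)) (hsub c (comb l p q)) =
      (1 - l) * (inner (hsub x p) (hsub c p) - l * inner (hsub x p) (hsub q p)) +
      l * (inner (hsub y q) (hsub c q) - (1 - l) * inner (hsub y q) (hsub p q)))
      by inner_ring.
    rewrite E. unfold p, q. rewrite !proj_orthogonal; try apply proj_mem; auto. lra.
Qed.

Lemma proj_compl_comb l x y :
  hsub (comb l x y) (proj C (comb l x y)) = comb l (hsub x (proj C x)) (hsub y (proj C y)).
Proof. rewrite proj_comb. vector_eq. Qed.

Lemma proj_compl_nonexpansive x y :
  norm (hsub (hsub x (proj C x)) (hsub y (proj C y))) <= norm (hsub x y).
Proof.
  apply norm_le_of_inner.
  pose proof (proj_orthogonal x (proj C y) (proj_mem y)) as h1.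
  pose proof (proj_orthogonal y (proj C x) (proj_mem x)) as h2.
  set (p := proj C x) in *. set (p' := proj C y) in *.
  pose proof (inner_nonneg X (hsub p p')).
  assert (E : inner (hsub (hsub x p) (hsub y p')) (hsub (hsub x p) (hsub y p')) =
     inner (hsub x y) (hsub x y) - inner (hsub p p') (hsub p p')
     + 2 * (inner (hsub x p) (hsub p' p) + inner (hsub y p') (hsub p p'))) by inner_ring.
  rewrite E, h1, h2. lra.
Qed.

Lemma resolvent_inv_normal_cone x a :
  resolvent (op_inv (normal_cone C)) x a <-> a = hsub x (proj C x).
Proof.
  unfold resolvent, op_inv, normal_cone. split.
  - intros [Hp H]. set (p := hsub x a) in *.
    assert (Ea : a = hsub x p) by (unfold p; vector_eq).
    assert (Hpp : p = proj C x) by (apply proj_unique; auto; intros c Hc; rewrite <- Ea; auto).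
    rewrite <- Hpp. exact Ea.
  - intros ->. replace (hsub x (hsub x (proj C x))) with (proj C x) by vector_eq.
    split; [apply proj_mem|apply proj_obtuse].
Qed.

Lemma resolvent_inv_vee_normal_cone w b :
  resolvent (op_inv_vee (normal_cone C)) w b <-> b = hadd w (proj C (hopp w)).
Proof.
  unfold resolvent, op_inv_vee, op_vee, op_inv, normal_cone. split.
  - intros [Hq H]. set (q := hopp (hsub w b)) in *.
    assert (Eb : hopp b = hsub (hopp w) q) by (unfold q; vector_eq).
    assert (Hqq : q = proj C (hopp w))
      by (apply proj_unique; auto; intros c Hc; rewrite <- Eb; auto).
    rewrite <- Hqq. unfold q. vector_eq.
  - intros ->.
    replace (hopp (hsub w (hadd w (proj C (hopp w))))) with (proj C (hopp w)) by vector_eq.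
    replace (hopp (hadd w (proj C (hopp w)))) with (hsub (hopp w) (proj C (hopp w)))
      by vector_eq.
    split; [apply proj_mem|apply proj_obtuse].
Qed.

End AffineProjection.

Section AffineNonexpansive.
Context {X : HilbertSpace}.
Variable T : X -> X.
Hypothesis T_comb : forall l x y, T (comb l x y) = comb l (T x) (T y).
Hypothesis T_nonexpansive : forall x y, norm (hsub (T x) (T y)) <= norm (hsub x y).

Lemma iter_nonexpansive n x y :
  norm (hsub (Nat.iter n T x) (Nat.iter n T y)) <= norm (hsub x y).
Proof.
  induction n as [|n IH]; simpl; [lra|].
  eapply Rle_trans; [apply T_nonexpansive|exact IH].
Qed.

Lemma ran_Id_minus_convex : is_convex (ran_Id_minus T).
Proof.
  intros a b l _ [x ->] [y ->]. exists (comb l x y). rewrite T_comb. vector_eq.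
Qed.

Lemma min_displacement_double_step z :
  proj (closure (ran_Id_minus T)) hzero = hsub z (T z) ->
  T (T z) = hsub (hscal 2 (T z)) z.
Proof.
  set (R := ran_Id_minus T). set (v := proj (closure R) hzero). intro Hz.
  assert (Hproj : is_proj (closure R) hzero v).
  { unfold v, proj. apply epsilon_spec.
    destruct (nearest_point_in_closure R hzero (ex_intro _ _ (ex_intro _ hzero eq_refl))
      ran_Id_minus_convex) as [p Hp].
    exists p. exact Hp. }
  set (r := hsub (T z) (T (T z))).
  assert (HRr : R r) by (exists (T z); reflexivity).
  assert (HRv : R v) by (exists z; exact Hz).
  assert (Hobtuse : inner (hsub hzero v) (hsub r v) <= 0).
  { apply (nearest_point_obtuse (closure R)); [exact Hproj|apply closure_incl, HRr|].
    intros t Ht. apply closure_incl, ran_Id_minus_convex; auto; lra. }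
  assert (Hshorter : inner r r <= inner v v).
  { apply inner_le_of_norm. rewrite Hz. apply T_nonexpansive. }
  assert (Hrv : r = v).
  { apply eq_of_inner_sub, Rle_antisym; [|apply inner_nonneg].
    assert (E : inner (hsub r v) (hsub r v)
                = inner r r - inner v v + 2 * inner (hsub hzero v) (hsub r v)) by inner_ring.
    lra. }
  unfold r in Hrv. rewrite Hz in Hrv.
  replace (T (T z)) with (hsub (T z) (hsub (T z) (T (T z)))) by vector_eq.
  rewrite Hrv. vector_eq.
Qed.

Lemma iter_of_double_step z : T (T z) = hsub (hscal 2 (T z)) z ->
  forall n, Nat.iter n T z = comb (INR n) z (T z).
Proof.
  intros HTT n. induction n as [|n IH].
  - simpl. vector_eq.
  - simpl Nat.iter. rewrite IH, T_comb, HTT, S_INR. vector_eq.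
Qed.

End AffineNonexpansive.

Section DouglasRachford.
Context {X : HilbertSpace}.
Variables U V : @hset X.
Hypotheses (HU : is_closed_affine U) (HV : is_closed_affine V).

Lemma DR_inv_normal_cones x z :
  DR_op (op_inv (normal_cone U)) (op_inv_vee (normal_cone V)) x z <-> z = T_UV U V x.
Proof.
  set (a := hsub x (proj U x)).
  assert (E : hopp (hsub (hscal 2 a) x) = hsub (hscal 2 (proj U x)) x) by (unfold a; vector_eq).
  split.
  - intros [a' [b [Ha [Hb ->]]]].
    apply resolvent_inv_normal_cone in Ha; auto. subst a'. fold a in Hb |- *.
    apply resolvent_inv_vee_normal_cone in Hb; auto. rewrite Hb, E.
    unfold T_UV, a. vector_eq.
  - intros ->. exists a, (hadd (hsub (hscal 2 a) x) (proj V (hopp (hsub (hscal 2 a) x)))).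
    split; [|split].
    + apply resolvent_inv_normal_cone; auto.
    + apply resolvent_inv_vee_normal_cone; auto.
    + rewrite E. unfold T_UV, a. vector_eq.
Qed.

Lemma T_UV_comb l x y : T_UV U V (comb l x y) = comb l (T_UV U V x) (T_UV U V y).
Proof.
  unfold T_UV. rewrite proj_comb by exact HU.
  set (p := proj U x). set (q := proj U y).
  replace (hsub (hscal 2 (comb l p q)) (comb l x y))
    with (comb l (hsub (hscal 2 p) x) (hsub (hscal 2 q) y)) by vector_eq.
  rewrite proj_comb by exact HV. vector_eq.
Qed.

(* Writing [P] and [Q] for the two projection steps, [‖T x - T y‖²] equals
   [‖x - y‖² - ‖(P x - P y) - (Q x - Q y)‖²] plus inner products that vanish by
   orthogonality of the projections onto the affine sets. *)
Lemma T_UV_nonexpansive x y : norm (hsub (T_UV U V x) (T_UV U V y)) <= norm (hsub x y).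
Proof.
  unfold T_UV. apply norm_le_of_inner.
  pose proof (proj_orthogonal U HU x (proj U y) (proj_mem U HU y)) as h1.
  pose proof (proj_orthogonal U HU y (proj U x) (proj_mem U HU x)) as h2.
  set (p := proj U x) in *. set (p' := proj U y) in *.
  pose proof (proj_orthogonal V HV (hsub (hscal 2 p) x) _ (proj_mem V HV (hsub (hscal 2 p') y)))
    as h3.
  pose proof (proj_orthogonal V HV (hsub (hscal 2 p') y) _ (proj_mem V HV (hsub (hscal 2 p) x)))
    as h4.
  set (q := proj V (hsub (hscal 2 p) x)) in *. set (q' := proj V (hsub (hscal 2 p') y)) in *.
  pose proof (inner_nonneg X (hsub (hsub p p') (hsub q q'))).
  assert (E : inner (hsub (hadd (hsub x p) q) (hadd (hsub y p') q'))
                    (hsub (hadd (hsub x p) q) (hadd (hsub y p') q')) =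
     inner (hsub x y) (hsub x y)
     - inner (hsub (hsub p p') (hsub q q')) (hsub (hsub p p') (hsub q q'))
     + 2 * (inner (hsub x p) (hsub p' p) + inner (hsub y p') (hsub p p') +
            inner (hsub (hsub (hscal 2 p) x) q) (hsub q' q) +
            inner (hsub (hsub (hscal 2 p') y) q') (hsub q q'))) by inner_ring.
  rewrite E, h1, h2, h3, h4. lra.
Qed.

Lemma proj_compl_T_UV_neq z : (forall x, ~ (U x /\ V x)) ->
  hsub z (proj U z) <> hsub (T_UV U V z) (proj U (T_UV U V z)).
Proof.
  intros Hdisj Heq.
  set (a := hsub z (proj U z)) in *. set (q := proj V (hsub (hscal 2 (proj U z)) z)).
  change (T_UV U V z) with (hadd a q) in Heq.
  assert (Hq : proj U (hadd a q) = q).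
  { replace (proj U (hadd a q)) with (hsub (hadd a q) (hsub (hadd a q) (proj U (hadd a q))))
      by vector_eq.
    rewrite <- Heq. vector_eq. }
  apply (Hdisj q). split.
  - rewrite <- Hq. apply proj_mem, HU.
  - apply proj_mem, HV.
Qed.

Lemma proj_compl_T_UV_iter_unbounded : (forall x, ~ (U x /\ V x)) ->
  ran_Id_minus (T_UV U V) (proj (closure (ran_Id_minus (T_UV U V))) hzero) ->
  forall x M, exists N : nat, forall n, (N <= n)%nat ->
    M < norm (hsub (Nat.iter n (T_UV U V) x) (proj U (Nat.iter n (T_UV U V) x))).
Proof.
  set (T := T_UV U V). set (Q := fun y => hsub y (proj U y)).
  intros Hdisj [z Hz] x M.
  pose proof (iter_of_double_step T T_UV_comb z
    (min_displacement_double_step T T_UV_comb T_UV_nonexpansive z Hz)) as Horbit.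
  set (w := hsub (Q z) (Q (T z))).
  assert (Hw : 0 < norm w).
  { destruct (Rle_lt_or_eq_dec 0 (norm w) (norm_nonneg w)) as [h|h]; auto.
    exfalso. apply (proj_compl_T_UV_neq z Hdisj).
    symmetry in h. apply norm_eq_0 in h.
    apply eq_of_inner_sub. change (inner w w = 0). rewrite h. apply inner_zero_l. }
  set (K := norm (Q z) + norm (hsub x z)).
  destruct (INR_unbounded ((M + K) / norm w)) as [N HN].
  exists N. intros n Hn. fold (Q (Nat.iter n T x)).
  assert (Hlin : INR n * norm w <= norm (Q z) + norm (Q (Nat.iter n T z))).
  { rewrite <- (Rabs_pos_eq (INR n)), <- norm_scal by apply pos_INR.
    replace (hscal (INR n) w) with (hsub (Q z) (Q (Nat.iter n T z)))
      by (unfold Q; rewrite Horbit, proj_compl_comb by exact HU; unfold w, Q; vector_eq).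
    apply norm_sub_le. }
  assert (Hclose : norm (Q (Nat.iter n T z)) <= norm (Q (Nat.iter n T x)) + norm (hsub x z)).
  { pose proof (norm_le_add_sub (Q (Nat.iter n T z)) (Q (Nat.iter n T x))) as Htri.
    pose proof (proj_compl_nonexpansive U HU (Nat.iter n T z) (Nat.iter n T x)) as HQ.
    pose proof (iter_nonexpansive T T_UV_nonexpansive n x z) as HT.
    rewrite norm_sub_comm in HT. unfold Q in *. lra. }
  apply le_INR in Hn.
  assert ((M + K) / norm w * norm w = M + K) by (field; lra).
  assert (M + K < INR n * norm w) by nra.
  unfold K in *. lra.
Qed.

End DouglasRachford.

Theorem mainTheorem13 (X : HilbertSpace) (U V : @hset X) :
  is_closed_affine U -> is_closed_affine V ->
  (forall x, ~ (U x /\ V x)) ->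
  ran_Id_minus (T_UV U V) (proj (closure (ran_Id_minus (T_UV U V))) hzero) ->
  (forall x z, DR_op (op_inv (normal_cone U)) (op_inv_vee (normal_cone V)) x z
               <-> z = T_UV U V x) /\
  (forall (x : X) (n : nat),
     forall y, resolvent (op_inv (normal_cone U)) (Nat.iter n (T_UV U V) x) y
       <-> y = hsub (Nat.iter n (T_UV U V) x) (proj U (Nat.iter n (T_UV U V) x))) /\
  (forall x : X, forall M : R, exists N : nat, forall n : nat, (N <= n)%nat ->
     forall y, resolvent (op_inv (normal_cone U)) (Nat.iter n (T_UV U V) x) y ->
       M < norm y).
Proof.
  intros HU HV Hdisj Hran. split; [|split].
  - apply DR_inv_normal_cones; assumption.
  - intros x n y. apply resolvent_inv_normal_cone, HU.
  - intros x M.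
    destruct (proj_compl_T_UV_iter_unbounded U V HU HV Hdisj Hran x M) as [N HN].
    exists N. intros n Hn y Hy.
    apply resolvent_inv_normal_cone in Hy; [|exact HU]. subst y. apply HN, Hn.
Qed.
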